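(* Let $\iota:R\to S$ be a ring morphism such that $S$ is locally projective as a left $R$-module, and let $\mathcal C=S\otimes_RS$ be the Sweedler $S$-coring, with $\Delta(s\otimes_R s')=(s\otimes_R1)\otimes_S(1\otimes_Rs')$ and $\varepsilon(s\otimes_Rs')=ss'$. Then $\mathrm{Rat}^{\mathcal C}({}^*\mathcal C)$ is dense in ${}^*\mathcal C$ in the finite topology, and hence the functor $\mathrm{Rat}^{\mathcal C}$ from right ${}^*\mathcal C$-modules to right $\mathcal C$-comodules is exact.
   Context: For a ring $A$ and an $A$-coring $\mathcal C$ (an $A$-bimodule with coassociative counital bimodule maps $\Delta:\mathcal C\to\mathcal C\otimes_A\mathcal C$, $\varepsilon:\mathcal C\to A$, $\Delta(c)=c_{(1)}\otimes c_{(2)}$), ${}^*\mathcal C={}_A\mathrm{Hom}(\mathcal C,A)$ is a ring with product $(f\#g)(c)=g(c_{(1)}f(c_{(2)}))$. Here $A=S$, and ${}^*\mathcal C\cong{}_R\mathrm{End}(S)$ with multiplication the opposite composition (via $\varphi\mapsto(s\mapsto\varphi(1\otimes_Rs))$). Right $\mathcal C$-comodules (coactions $n\mapsto n_{[0]}\otimes n_{[1]}\in N\otimes_S\mathcal C$) are right ${}^*\mathcal C$-modules via $n\cdot f=n_{[0]}f(n_{[1]})$. For a right ${}^*\mathcal C$-module $M$, $\mathrm{Rat}^{\mathcal C}(M)$ is the set of $m\in M$ for which there is $\sum_i m_i\otimes c_i\in M\otimes_S\mathcal C$ with $m\cdot f=\sum_i m_if(c_i)$ for all $f\in{}^*\mathcal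 C$. The finite topology on ${}^*\mathcal C={}_S\mathrm{Hom}(\mathcal C,S)$ has basic open sets $\{g\mid g(c)=f(c)\ \forall c\in F\}$, $F\subseteq\mathcal C$ finite. *)

From HB Require Import structures.
From mathcomp Require Import all_boot all_order all_algebra.
Set Implicit Arguments. Unset Strict Implicit. Unset Printing Implicit Defensive.
Import GRing.Theory.
Local Open Scope ring_scope.

(* Setting: a ring morphism i : R -> S; S is a left R-module via r . s = i r * s.
   The Sweedler coring C = S (x)_R S has dual ring *C ~= _R End(S), with
   product the OPPOSITE composition (f # g corresponds to g \o f), via
   f |-> (s |-> f (1 (x) s)).  We work with *C through this identification. *)

Section Defs.
Variables (R S : nzRingType) (i : {rmorphism R -> S}).

Definition RdualS (f : S -> R) : Prop :=
  (forall x y, f (x + y) = f x + f y) /\ (forall r x, f (i r * x) = r * f x).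

Definition locally_projective_left : Prop :=
  forall F : seq S, exists n (fs : 'I_n -> S -> R) (ss : 'I_n -> S),
    (forall k, RdualS (fs k)) /\
    (forall x, x \in F -> x = \sum_(k < n) i (fs k x) * ss k).

(* elements of *C = _R End(S) *)
Definition Rlin (phi : S -> S) : Prop :=
  (forall x y, phi (x + y) = phi x + phi y) /\
  (forall r x, phi (i r * x) = i r * phi x).

(* the image of s in *C under S -> *C, s |-> eps(-) s; as an endomorphism
   it is right multiplication by s *)
Definition rmul (s : S) : S -> S := fun t => t * s.

(* Rat^C( *C ): phi is rational iff there are psi_k in *C and
   c_k = 1 (x) t_k in C with  phi # chi = sum_k psi_k chi(c_k)  for all chi,
   i.e. chi \o phi = sum_k (x |-> psi_k x * chi t_k). *)
Definition rat_dual (phi : S -> S) : Prop :=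
  exists n (psis : 'I_n -> S -> S) (ts : 'I_n -> S),
    (forall k, Rlin (psis k)) /\
    (forall chi, Rlin chi -> forall x,
        chi (phi x) = \sum_(k < n) psis k x * chi (ts k)).

Definition rat_dense : Prop :=
  forall (phi : S -> S), Rlin phi -> forall F : seq S,
    exists psi, Rlin psi /\ rat_dual psi /\ forall t, t \in F -> psi t = phi t.

(* right *C-modules: an additive group M with action m . f, written
   act phi m for phi the endomorphism corresponding to f;
   m . (f # g) = (m . f) . g  becomes  act (g \o f) m = act g (act f m). *)
Definition is_dual_module (M : zmodType) (act : (S -> S) -> M -> M) : Prop :=
  [/\ forall phi, Rlin phi -> forall m m', act phi (m + m') = act phi m + act phi m',
      forall phi psi, Rlin phi -> Rlin psi -> forall m,
        act (fun t => phi t + psi t) m = act phi m + act psi m,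
      forall m, act id m = m &
      forall phi psi, Rlin phi -> Rlin psi -> forall m,
        act (phi \o psi) m = act phi (act psi m)].

Definition is_dual_hom (M N : zmodType) (actM : (S -> S) -> M -> M)
  (actN : (S -> S) -> N -> N) (h : M -> N) : Prop :=
  (forall m m', h (m + m') = h m + h m') /\
  (forall phi, Rlin phi -> forall m, h (actM phi m) = actN phi (h m)).

(* Rat^C(M): m is rational iff there is sum_k m_k (x)_S c_k in M (x)_S C with
   m . f = sum_k m_k f(c_k) for all f.  Writing c_k = sum s (x) t and using
   m (x)_S (s (x) t) = m.s (x)_S (1 (x) t), elements of M (x)_S C are sums
   sum_k m_k (x)_S (1 (x) t_k), and m_k f(1 (x) t_k) = m_k . (chi t_k),
   the right S-action on M being through s |-> eps(-)s, i.e. act (rmul s). *)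
Definition rat_elem (M : zmodType) (act : (S -> S) -> M -> M) (m : M) : Prop :=
  exists n (ms : 'I_n -> M) (ts : 'I_n -> S),
    forall chi, Rlin chi ->
      act chi m = \sum_(k < n) act (rmul (chi (ts k))) (ms k).

Definition rat_exact : Prop :=
  forall (K M N : zmodType) (actK : (S -> S) -> K -> K)
         (actM : (S -> S) -> M -> M) (actN : (S -> S) -> N -> N)
         (f : K -> M) (g : M -> N),
    is_dual_module actK -> is_dual_module actM -> is_dual_module actN ->
    is_dual_hom actK actM f -> is_dual_hom actM actN g ->
    injective f -> (forall m, g m = 0 <-> exists k, m = f k) ->
    (forall n, exists m, g m = n) ->
    [/\ (forall k, rat_elem actK k -> rat_elem actM (f k)),
        (forall m, rat_elem actM m -> rat_elem actN (g m)),
        (forall m, rat_elem actM m -> g m = 0 ->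
            exists k, rat_elem actK k /\ f k = m) &
        (forall n, rat_elem actN n -> exists m, rat_elem actM m /\ g m = n)].

End Defs.

(* Local projectivity yields, for every finite F in S, elements f_k of the
   dual _R Hom(S, R) and s_k in S with x = sum_k f_k(x) s_k on F, hence
   chi x = sum_k f_k(x) chi(s_k) on F for every R-linear chi.  Applied to an
   arbitrary phi this exhibits the map x |-> sum_k f_k(x) phi(s_k), visibly
   rational, that agrees with phi on F: density.  Applied to the finitely
   many t_j witnessing the rationality of an element m of a *C-module, it
   shows that m . chi = sum_k (m . f_k) chi(s_k), with the f_k and s_k
   independent of chi; this explicit form is what transfers rationality
   back along monomorphisms and lifts it along epimorphisms. *)

From mathcomp Require Import all_boot all_order all_algebra.
From Stdlib Require Import FunctionalExtensionality.
Set Implicit Arguments. Unset Strict Implicit. Unset Printing Implicit Defensive.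
Import GRing.Theory.
Local Open Scope ring_scope.

Lemma additive_sum (V W : zmodType) (h : V -> W) :
  {morph h : x y / x + y} ->
  forall I (r : seq I) (P : pred I) (F : I -> V),
    h (\sum_(k <- r | P k) F k) = \sum_(k <- r | P k) h (F k).
Proof.
move=> hD; apply: big_morph => //.
by apply: (@addrI _ (h 0)); rewrite -hD !addr0.
Qed.

Section SweedlerDual.
Variables (R S : nzRingType) (i : {rmorphism R -> S}).

Definition dual_endo (f : S -> R) : S -> S := fun x => i (f x).

Definition dual_basis_expand n (fs : 'I_n -> S -> R) (ss : 'I_n -> S)
    (phi : S -> S) : S -> S :=
  fun x => \sum_(k < n) i (fs k x) * phi (ss k).

Lemma Rlin_comp phi psi : Rlin i phi -> Rlin i psi -> Rlin i (phi \o psi).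
Proof. by move=> [phiD phiZ] [psiD psiZ]; split=> *; rewrite /= ?psiD ?phiD ?psiZ ?phiZ. Qed.

Lemma Rlin_rmul s : Rlin i (rmul s).
Proof. by split=> *; rewrite /rmul ?mulrDl ?mulrA. Qed.

Lemma Rlin_dual_endo f : RdualS i f -> Rlin i (dual_endo f).
Proof. by move=> [fD fZ]; split=> *; rewrite /dual_endo ?fD ?fZ ?rmorphD ?rmorphM. Qed.

Lemma Rlin_rmul_dual_endo s f : RdualS i f -> Rlin i (rmul s \o dual_endo f).
Proof. by move=> Hf; apply: Rlin_comp; [apply: Rlin_rmul | apply: Rlin_dual_endo]. Qed.

Lemma Rlin_sum n (F : 'I_n -> S -> S) :
  (forall k, Rlin i (F k)) -> Rlin i (fun x => \sum_(k < n) F k x).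
Proof.
move=> HF; split=> [x y | r x].
  by rewrite -big_split; apply: eq_bigr => k _; case: (HF k) => ->.
by rewrite mulr_sumr; apply: eq_bigr => k _; case: (HF k) => _ ->.
Qed.

Lemma Rlin_dual_basis_expand n (fs : 'I_n -> S -> R) ss phi :
  (forall k, RdualS i (fs k)) -> Rlin i (dual_basis_expand fs ss phi).
Proof.
move=> Hfs; apply: (@Rlin_sum n (fun k => rmul (phi (ss k)) \o dual_endo (fs k))).
by move=> k; apply: Rlin_rmul_dual_endo.
Qed.

Lemma Rlin_comp_rmul_dual_endo chi s f :
  Rlin i chi -> (chi \o rmul s) \o dual_endo f = rmul (chi s) \o dual_endo f.
Proof. by move=> [_ chiZ]; apply: functional_extensionality => x /=; rewrite chiZ. Qed.

Lemma rat_dual_basis_expand n (fs : 'I_n -> S -> R) ss phi :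
  (forall k, RdualS i (fs k)) -> Rlin i phi ->
  rat_dual i (dual_basis_expand fs ss phi).
Proof.
move=> Hfs Hphi; exists n, (fun k => dual_endo (fs k)), (fun k => phi (ss k)).
split=> [k | chi [chiD chiZ] x]; first exact: Rlin_dual_endo.
by rewrite additive_sum //; apply: eq_bigr => k _; rewrite chiZ.
Qed.

Lemma dual_basis_expandE (F : seq S) n (fs : 'I_n -> S -> R) ss chi :
  (forall x, x \in F -> x = \sum_(k < n) i (fs k x) * ss k) ->
  Rlin i chi -> forall x, x \in F -> dual_basis_expand fs ss chi x = chi x.
Proof.
move=> Hbasis [chiD chiZ] x xF; rewrite [in RHS](Hbasis x xF) additive_sum //.
by apply: eq_bigr => k _; rewrite chiZ.
Qed.

Lemma rat_dense_of_locally_projective :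
  locally_projective_left i -> rat_dense i.
Proof.
move=> lp phi Hphi F; have [n [fs [ss [Hfs Hbasis]]]] := lp F.
exists (dual_basis_expand fs ss phi); split; first exact: Rlin_dual_basis_expand.
split; first exact: rat_dual_basis_expand.
exact: dual_basis_expandE Hbasis Hphi.
Qed.

Section DualModule.
Variables (M : zmodType) (act : (S -> S) -> M -> M).
Hypothesis HM : is_dual_module i act.

Lemma act_sumr phi n (ms : 'I_n -> M) : Rlin i phi ->
  act phi (\sum_(k < n) ms k) = \sum_(k < n) act phi (ms k).
Proof. by case: HM => actD _ _ _ Hphi; apply: additive_sum; apply: actD. Qed.

Lemma act_zero m : act (fun _ => 0) m = 0.
Proof.
have H0 : Rlin i (fun _ : S => 0 : S) by split=> *; rewrite ?addr0 ?mulr0.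
case: HM => _ actDl _ _; apply: (@addrI _ (act (fun _ => 0) m)).
rewrite addr0 -actDl //; congr act.
by apply: functional_extensionality => x; rewrite addr0.
Qed.

Lemma act_suml n (F : 'I_n -> S -> S) m : (forall k, Rlin i (F k)) ->
  act (fun x => \sum_(k < n) F k x) m = \sum_(k < n) act (F k) m.
Proof.
case: HM => _ actDl _ _; elim: n F => [|n IH] F HF.
  rewrite big_ord0 -(act_zero m); congr act.
  by apply: functional_extensionality => x; rewrite big_ord0.
have HF' k : Rlin i (F (lift ord0 k)) by apply: HF.
rewrite big_ord_recl -(IH _ HF') -actDl //; last exact: Rlin_sum.
by congr act; apply: functional_extensionality => x; rewrite big_ord_recl.
Qed.

Definition dual_basis_part n (fs : 'I_n -> S -> R) (ss : 'I_n -> S) (m : M) : M :=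
  \sum_(k < n) act (rmul (ss k)) (act (dual_endo (fs k)) m).

Lemma act_dual_basis_expand n (fs : 'I_n -> S -> R) ss chi m :
  (forall k, RdualS i (fs k)) ->
  act (dual_basis_expand fs ss chi) m = dual_basis_part fs (chi \o ss) m.
Proof.
move=> Hfs; case: (HM) => _ _ _ actM.
rewrite (act_suml (F := fun k => rmul (chi (ss k)) \o dual_endo (fs k))); last first.
  by move=> k; apply: Rlin_rmul_dual_endo.
by apply: eq_bigr => k _; rewrite actM //; [apply: Rlin_rmul | apply: Rlin_dual_endo].
Qed.

Lemma rat_elem_dual_basis_part n (fs : 'I_n -> S -> R) ss m :
  (forall k, RdualS i (fs k)) -> rat_elem i act (dual_basis_part fs ss m).
Proof.
move=> Hfs; exists n, (fun k => act (dual_endo (fs k)) m), ss => chi Hchi.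
case: (HM) => _ _ _ actM; rewrite act_sumr //; apply: eq_bigr => k _.
have Hd := Rlin_dual_endo (Hfs k).
rewrite -!actM ?Rlin_comp_rmul_dual_endo //;
  [exact: Rlin_rmul | exact: Rlin_comp Hchi (Rlin_rmul _) | exact: Rlin_rmul].
Qed.

Lemma rat_elem_dual_basis m :
  locally_projective_left i -> rat_elem i act m ->
  exists n (fs : 'I_n -> S -> R) (ss : 'I_n -> S),
    (forall k, RdualS i (fs k)) /\
    forall chi, Rlin i chi -> act chi m = dual_basis_part fs (chi \o ss) m.
Proof.
move=> lp [p [ms [ts Hm]]].
have [n [fs [ss [Hfs Hbasis]]]] := lp [seq ts j | j <- enum 'I_p].
exists n, fs, ss; split=> // chi Hchi.
rewrite -act_dual_basis_expand // Hm // Hm //; last exact: Rlin_dual_basis_expand.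
apply: eq_bigr => j _; rewrite (dual_basis_expandE Hbasis) //.
by apply: map_f; rewrite mem_enum.
Qed.

End DualModule.

Section DualHom.
Variables (M N : zmodType) (actM : (S -> S) -> M -> M) (actN : (S -> S) -> N -> N).
Variable h : M -> N.
Hypothesis Hh : is_dual_hom i actM actN h.

Lemma rat_elem_dual_hom m : rat_elem i actM m -> rat_elem i actN (h m).
Proof.
case: Hh => hD hA [n [ms [ts Hm]]]; exists n, (fun k => h (ms k)), ts => chi Hchi.
rewrite -hA // Hm // additive_sum //; apply: eq_bigr => k _; exact/hA/Rlin_rmul.
Qed.

Lemma dual_hom_dual_basis_part n (fs : 'I_n -> S -> R) ss m :
  (forall k, RdualS i (fs k)) ->
  h (dual_basis_part actM fs ss m) = dual_basis_part actN fs ss (h m).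
Proof.
case: Hh => hD hA Hfs; rewrite additive_sum //; apply: eq_bigr => k _.
by rewrite hA ?hA //; [apply: Rlin_dual_endo | apply: Rlin_rmul].
Qed.

Lemma rat_elem_of_injective_dual_hom m :
  locally_projective_left i -> is_dual_module i actN -> injective h ->
  rat_elem i actN (h m) -> rat_elem i actM m.
Proof.
move=> lp HN hinj /(rat_elem_dual_basis HN lp) [n [fs [ss [Hfs Hhm]]]].
exists n, (fun k => actM (dual_endo (fs k)) m), ss => chi Hchi.
case: Hh => _ hA; apply: hinj.
rewrite -[RHS]/(h (dual_basis_part actM fs (chi \o ss) m)).
by rewrite hA // Hhm // dual_hom_dual_basis_part.
Qed.

Lemma rat_elem_lift_dual_hom n0 :
  locally_projective_left i -> is_dual_module i actM -> is_dual_module i actN ->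
  rat_elem i actN n0 -> (exists m, h m = n0) ->
  exists m, rat_elem i actM m /\ h m = n0.
Proof.
move=> lp HM HN Hn0 [m0 Em0]; subst n0.
have [n [fs [ss [Hfs Hhm0]]]] := rat_elem_dual_basis HN lp Hn0.
exists (dual_basis_part actM fs ss m0); split; first exact: rat_elem_dual_basis_part.
case: (HN) => _ _ actN_id _.
by rewrite dual_hom_dual_basis_part // -{2}[h m0]actN_id (Hhm0 id).
Qed.

End DualHom.

Lemma rat_exact_of_locally_projective :
  locally_projective_left i -> rat_exact i.
Proof.
move=> lp K M N actK actM actN f g _ HM HN Hf Hg finj gker gsurj; split.
- exact: rat_elem_dual_hom.
- exact: rat_elem_dual_hom.
- move=> m Hm /gker [k Em]; exists k; split=> //.
  by apply: (rat_elem_of_injective_dual_hom Hf lp HM finj); rewrite -Em.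
- by move=> n Hn; apply: (rat_elem_lift_dual_hom Hg lp HM HN Hn).
Qed.

End SweedlerDual.

Theorem mainTheorem18 (R S : nzRingType) (i : {rmorphism R -> S}) :
  locally_projective_left i -> rat_dense i /\ rat_exact i.
Proof.
move=> lp; split.
- exact: rat_dense_of_locally_projective.
- exact: rat_exact_of_locally_projective.
Qed.
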